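(* Consider the optimization problem $$\mathcal{P}_1:\ \min_{\{I_{G,i},I_{H,i},I_{D,i},p_{G,i},p_{H,i}\}_{i=1}^N}\ \sum_{n=1}^N \big(w_G\, p_{G,n}\tau + w_D I_{D,n}\big)$$ subject to, for all $i\in\mathcal{N}=\{1,\dots,N\}$: $I_{G,i}+I_{H,i}+I_{D,i}=1$; $\sum_{l=1}^{i} p_{H,l}\tau\le \sum_{n=1}^{i}E_{H,n}$; $\sum_{j\in\{G,H\}} I_{j,i}\, r(p_{j,i},h_{j,i})\ge (1-I_{D,i})R$; $0\le p_{j,i}\le p_j^{\max}$ for $j\in\{G,H\}$; $I_{j,i}\in\{0,1\}$ for $j\in\{G,H,D\}$. Consider also the zero-one integer program $$\hat{\mathcal{P}}_1:\ \min_{\{\alpha_i\}}\ \sum_{n=1}^N (1-\alpha_n)c_n\quad\text{s.t.}\quad \sum_{k=1}^{i}\alpha_k p^{inv}_{H,k}\tau\le\sum_{l=1}^{i}E_{H,l},\ \ \alpha_i p^{inv}_{H,i}\le p_H^{\max},\ \ \alpha_i\in\{0,1\},\ \ \forall i\in\mathcal{N},$$ where $p^{inv}_{j,i}=(2^{R/(W\tau)}-1)\sigma^2 h_{j,i}^{-1}$ for $j\in\{G,H\}$, $\kappa=\min\{p_G^{\max},\,w_D(w_G\tau)^{-1}\}$, and $c_i=w_D$ if $p^{inv}_{G,i}>\kappa$ and $c_i=w_G p^{inv}_{G,i}\tau$ if $p^{inv}_{G,i}\le\kappa$. Then $\mathcal{P}_1$ is equivalent to $\hat{\mathcal{P}}_1$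 in the following sense: for any feasible $\{\alpha_i\}$ of $\hat{\mathcal{P}}_1$, the assignment $I_{H,i}=\alpha_i$, $I_{G,i}=(1-\alpha_i)\mathbf{1}\{p^{inv}_{G,i}\le\kappa\}$, $I_{D,i}=1-I_{G,i}-I_{H,i}$, $p_{j,i}=I_{j,i}p^{inv}_{j,i}$ ($j\in\{G,H\}$) is the corresponding solution of $\mathcal{P}_1$; the two problems have the same optimal value; and if $\{\alpha_i\}$ is optimal for $\hat{\mathcal{P}}_1$, then the corresponding $\{I_{G,i},I_{H,i},I_{D,i}\}$, $\{p_{H,i}\}$, $\{p_{G,i}\}$ are optimal for $\mathcal{P}_1$.
   Context: A hybrid energy supply network: a grid-powered base station (GP-BS, index $G$) and an energy-harvesting base station (EH-BS, index $H$) serve one user over $N$ blocks of length $\tau>0$. In each block one packet of $R>0$ bits arrives; it is sent by the GP-BS ($I_{G,i}=1$), by the EH-BS ($I_{H,i}=1$), or dropped ($I_{D,i}=1$). $p_{G,i},p_{H,i}\ge 0$ are transmit powers, $p_G^{\max},p_H^{\max}>0$ peak powers, $E_{H,i}\ge0$ is the energy harvested by the EH-BS at the start of block $i$, $h_{G,i},h_{H,i}>0$ are the channel gains, and $r(p,h)=\tau W\log_2(1+h\sigma^{-2}p)$ with bandwidth $W>0$ and noise variance $\sigma^2>0$. The weights satisfy $w_G,w_D>0$. $\mathbf{1}\{\cdot\}$ is the indicator function. *)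

From Stdlib Require Import Reals Lra.
Open Scope R_scope.

(* Blocks are indexed 0,...,N-1 (paper: 1,...,N).
   sumR f n = f 0 + ... + f (n-1). *)
Fixpoint sumR (f : nat -> R) (n : nat) : R :=
  match n with
  | O => 0
  | S m => sumR f m + f m
  end.

Definition log2 (x : R) : R := ln x / ln 2.

Definition rate (tau W sig2 : R) (p h : R) : R :=
  tau * W * log2 (1 + h * / sig2 * p).

Definition binary (x : R) : Prop := x = 0 \/ x = 1.

Definition P1_feasible (N : nat) (tau W sig2 Rb pGmax pHmax : R)
    (EH hG hH : nat -> R) (IG IH ID pG pH : nat -> R) : Prop :=
  forall i, (i < N)%nat ->
    IG i + IH i + ID i = 1 /\
    sumR (fun l => pH l * tau) (S i) <= sumR EH (S i) /\
    IG i * rate tau W sig2 (pG i) (hG i) + IH i * rate tau W sig2 (pH i) (hH i)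
      >= (1 - ID i) * Rb /\
    0 <= pG i <= pGmax /\ 0 <= pH i <= pHmax /\
    binary (IG i) /\ binary (IH i) /\ binary (ID i).

Definition P1_obj (N : nat) (tau wG wD : R) (ID pG : nat -> R) : R :=
  sumR (fun n => wG * pG n * tau + wD * ID n) N.

Definition pinv (tau W sig2 Rb : R) (h : R) : R :=
  (Rpower 2 (Rb / (W * tau)) - 1) * sig2 * / h.

Definition kappa (tau pGmax wG wD : R) : R := Rmin pGmax (wD * / (wG * tau)).

Definition cost (tau W sig2 Rb pGmax wG wD : R) (hG : nat -> R) (i : nat) : R :=
  if Rle_dec (pinv tau W sig2 Rb (hG i)) (kappa tau pGmax wG wD)
  then wG * pinv tau W sig2 Rb (hG i) * tau
  else wD.

Definition hatP1_feasible (N : nat) (tau W sig2 Rb pHmax : R)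
    (EH hH : nat -> R) (alpha : nat -> R) : Prop :=
  forall i, (i < N)%nat ->
    sumR (fun k => alpha k * pinv tau W sig2 Rb (hH k) * tau) (S i) <= sumR EH (S i) /\
    alpha i * pinv tau W sig2 Rb (hH i) <= pHmax /\
    binary (alpha i).

Definition hatP1_obj (N : nat) (tau W sig2 Rb pGmax wG wD : R) (hG : nat -> R)
    (alpha : nat -> R) : R :=
  sumR (fun n => (1 - alpha n) * cost tau W sig2 Rb pGmax wG wD hG n) N.

Definition corr_IH (alpha : nat -> R) : nat -> R := fun i => alpha i.

Definition corr_IG (tau W sig2 Rb pGmax wG wD : R) (hG : nat -> R)
    (alpha : nat -> R) : nat -> R :=
  fun i => (1 - alpha i) *
    (if Rle_dec (pinv tau W sig2 Rb (hG i)) (kappa tau pGmax wG wD) then 1 else 0).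

Definition corr_ID (tau W sig2 Rb pGmax wG wD : R) (hG : nat -> R)
    (alpha : nat -> R) : nat -> R :=
  fun i => 1 - corr_IG tau W sig2 Rb pGmax wG wD hG alpha i - corr_IH alpha i.

Definition corr_pG (tau W sig2 Rb pGmax wG wD : R) (hG : nat -> R)
    (alpha : nat -> R) : nat -> R :=
  fun i => corr_IG tau W sig2 Rb pGmax wG wD hG alpha i * pinv tau W sig2 Rb (hG i).

Definition corr_pH (tau W sig2 Rb : R) (hH : nat -> R)
    (alpha : nat -> R) : nat -> R :=
  fun i => corr_IH alpha i * pinv tau W sig2 Rb (hH i).

(* For each block, once it is decided whether the EH-BS serves the packet, the
   cheapest way to complete the decision is forced.  The rate is increasing in the
   power, so serving a packet over channel h costs at least the power p^inv(h)
   that achieves rate R exactly.  Hence the EH-BS spends at least I_H p^inv_H,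
   which makes I_H a feasible point of the 0-1 program, and a block not served by
   the EH-BS costs at least c_i: dropping costs w_D >= c_i, and serving it from
   the grid with p^inv_G <= p <= p_G^max costs w_G p tau >= c_i by the choice of
   kappa.  The assignment built from alpha attains these bounds, so the two
   objectives agree on it; and the 0-1 program, having finitely many points up to
   the irrelevant values beyond block N, attains its minimum. *)

From Stdlib Require Import Reals Lra Lia List Classical.
Open Scope R_scope.

Lemma ln2_pos : 0 < ln 2.
Proof. pose proof ln_lt_2; lra. Qed.

Lemma sumR_ext (f g : nat -> R) (n : nat) :
  (forall i, (i < n)%nat -> f i = g i) -> sumR f n = sumR g n.
Proof.
  induction n as [|n IHn]; intros Hfg; simpl; [reflexivity|].
  rewrite IHn by (intros; apply Hfg; lia).
  rewrite Hfg by lia; reflexivity.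
Qed.

Lemma sumR_le (f g : nat -> R) (n : nat) :
  (forall i, (i < n)%nat -> f i <= g i) -> sumR f n <= sumR g n.
Proof.
  induction n as [|n IHn]; intros Hfg; simpl; [lra|].
  pose proof (IHn ltac:(intros; apply Hfg; lia)).
  pose proof (Hfg n ltac:(lia)).
  lra.
Qed.

Lemma rate_lt_compat (tau W sig2 h p q : R) :
  0 < tau -> 0 < W -> 0 < sig2 -> 0 < h -> 0 <= p < q ->
  rate tau W sig2 p h < rate tau W sig2 q h.
Proof.
  intros Htau HW Hsig2 Hh Hpq.
  unfold rate, log2.
  assert (Hgain : 0 < h * / sig2) by (apply Rmult_lt_0_compat, Rinv_0_lt_compat; lra).
  assert (Hln : ln (1 + h * / sig2 * p) < ln (1 + h * / sig2 * q))
    by (apply ln_increasing; nra).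
  apply Rmult_lt_compat_l; [nra|].
  apply Rmult_lt_compat_r; [apply Rinv_0_lt_compat, ln2_pos | exact Hln].
Qed.

Lemma pinv_nonneg (tau W sig2 Rb h : R) :
  0 < tau -> 0 < W -> 0 < sig2 -> 0 <= Rb -> 0 < h -> 0 <= pinv tau W sig2 Rb h.
Proof.
  intros Htau HW Hsig2 HRb Hh.
  unfold pinv.
  assert (H1 : 1 <= Rpower 2 (Rb / (W * tau))).
  { rewrite <- (Rpower_O 2) by lra.
    apply Rle_Rpower; [lra|].
    apply Rmult_le_pos; [lra|].
    apply Rlt_le, Rinv_0_lt_compat; nra. }
  apply Rmult_le_pos; [apply Rmult_le_pos; lra|].
  apply Rlt_le, Rinv_0_lt_compat; lra.
Qed.

Lemma rate_pinv (tau W sig2 Rb h : R) :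
  0 < tau -> 0 < W -> 0 < sig2 -> 0 < h ->
  rate tau W sig2 (pinv tau W sig2 Rb h) h = Rb.
Proof.
  intros Htau HW Hsig2 Hh.
  unfold rate, pinv, log2.
  replace (1 + h * / sig2 * ((Rpower 2 (Rb / (W * tau)) - 1) * sig2 * / h))
    with (Rpower 2 (Rb / (W * tau))) by (field; lra).
  unfold Rpower; rewrite ln_exp.
  pose proof ln2_pos.
  field; lra.
Qed.

Lemma pinv_le_of_rate_ge (tau W sig2 Rb h p : R) :
  0 < tau -> 0 < W -> 0 < sig2 -> 0 < h -> 0 <= p ->
  rate tau W sig2 p h >= Rb -> pinv tau W sig2 Rb h <= p.
Proof.
  intros Htau HW Hsig2 Hh Hp Hrate.
  apply Rnot_lt_le; intros Hlt.
  pose proof (rate_lt_compat tau W sig2 h p (pinv tau W sig2 Rb h)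
                Htau HW Hsig2 Hh (conj Hp Hlt)).
  rewrite rate_pinv in * by assumption.
  lra.
Qed.

Lemma cost_le_drop (tau W sig2 Rb pGmax wG wD : R) (hG : nat -> R) (i : nat) :
  0 < tau -> 0 < wG -> cost tau W sig2 Rb pGmax wG wD hG i <= wD.
Proof.
  intros Htau HwG.
  unfold cost.
  destruct Rle_dec as [Hk|_]; [|lra].
  assert (Hk' : pinv tau W sig2 Rb (hG i) <= wD * / (wG * tau))
    by (eapply Rle_trans; [exact Hk | apply Rmin_r]).
  assert (Hq : wG * tau * (wD * / (wG * tau)) = wD) by (field; lra).
  pose proof (Rmult_le_compat_l (wG * tau) _ _ ltac:(nra) Hk').
  nra.
Qed.

Lemma cost_le_grid (tau W sig2 Rb pGmax wG wD : R) (hG : nat -> R) (i : nat) (p : R) :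
  0 < tau -> 0 < wG -> pinv tau W sig2 Rb (hG i) <= p <= pGmax ->
  cost tau W sig2 Rb pGmax wG wD hG i <= wG * p * tau.
Proof.
  intros Htau HwG Hp.
  assert (HwGtau : 0 < wG * tau) by nra.
  unfold cost, kappa.
  destruct Rle_dec as [_|Hk]; [nra|].
  (* pinv <= pGmax, so the test can only fail on the threshold w_D / (w_G tau) *)
  apply Rnot_le_lt in Hk.
  unfold Rmin in Hk; destruct Rle_dec in Hk; [lra|].
  assert (Hq : wG * tau * (wD * / (wG * tau)) = wD) by (field; lra).
  nra.
Qed.

Definition update (g : nat -> R) (m : nat) (b : R) : nat -> R :=
  fun i => if Nat.eq_dec i m then b else g i.

Fixpoint binary_vectors (n : nat) : list (nat -> R) :=
  match n with
  | O => (fun _ => 0) :: nil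
  | S m => flat_map (fun g => update g m 0 :: update g m 1 :: nil) (binary_vectors m)
  end.

Lemma binary_vectors_complete (n : nat) (a : nat -> R) :
  (forall i, (i < n)%nat -> binary (a i)) ->
  exists g, In g (binary_vectors n) /\ forall i, (i < n)%nat -> g i = a i.
Proof.
  revert a; induction n as [|n IHn]; intros a Ha.
  - exists (fun _ => 0); split; [left; reflexivity | intros; lia].
  - destruct (IHn a ltac:(intros; apply Ha; lia)) as [g [Hg Hga]].
    exists (update g n (a n)); split.
    + apply in_flat_map; exists g; split; [exact Hg|].
      destruct (Ha n ltac:(lia)) as [-> | ->]; simpl; auto.
    + intros i Hi; unfold update.
      destruct Nat.eq_dec as [->|]; [reflexivity | apply Hga; lia].
Qed.

Lemma exists_min_in_list {A : Type} (P : A -> Prop) (f : A -> R) (L : list A) :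
  (exists x, In x L /\ P x) ->
  exists m, In m L /\ P m /\ forall y, In y L -> P y -> f m <= f y.
Proof.
  induction L as [|a L IHL]; intros [x [Hx Px]]; [destruct Hx|].
  destruct (classic (exists y, In y L /\ P y)) as [HL|HL].
  - destruct (IHL HL) as [m [Hm [Pm Hmin]]].
    destruct (classic (P a /\ f a <= f m)) as [[Pa Ham]|Hma].
    + exists a; split; [left; reflexivity|]; split; [exact Pa|].
      intros y [<- | Hy] Py; [lra|].
      specialize (Hmin y Hy Py); lra.
    + exists m; split; [right; exact Hm|]; split; [exact Pm|].
      intros y [<- | Hy] Py; [|exact (Hmin y Hy Py)].
      apply Rnot_lt_le; intros Hlt; apply Hma; split; [exact Py | lra].
  - destruct Hx as [-> | Hx]; [|exfalso; apply HL; eauto].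
    exists x; split; [left; reflexivity|]; split; [exact Px|].
    intros y [<- | Hy] Py; [lra | exfalso; apply HL; eauto].
Qed.

Lemma binary_program_has_minimizer (n : nat) (P : (nat -> R) -> Prop)
    (f : (nat -> R) -> R) :
  (forall a b, (forall i, (i < n)%nat -> a i = b i) -> P a -> P b) ->
  (forall a b, (forall i, (i < n)%nat -> a i = b i) -> f a = f b) ->
  (forall a, P a -> forall i, (i < n)%nat -> binary (a i)) ->
  (exists a, P a) ->
  exists m, P m /\ forall a, P a -> f m <= f a.
Proof.
  intros HP Hf Hbin [a Pa].
  destruct (exists_min_in_list P f (binary_vectors n)) as [m [_ [Pm Hmin]]].
  { destruct (binary_vectors_complete n a (Hbin a Pa)) as [g [Hg Hga]].
    exists g; split; [exact Hg | exact (HP a g (fun i Hi => eq_sym (Hga i Hi)) Pa)]. }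
  exists m; split; [exact Pm|].
  intros b Pb.
  destruct (binary_vectors_complete n b (Hbin b Pb)) as [g [Hg Hgb]].
  rewrite <- (Hf g b Hgb).
  apply Hmin; [exact Hg | exact (HP b g (fun i Hi => eq_sym (Hgb i Hi)) Pb)].
Qed.

Section Equivalence.

Variables (N : nat) (tau W sig2 Rb pGmax pHmax wG wD : R) (EH hG hH : nat -> R).
Hypotheses (Htau : 0 < tau) (HW : 0 < W) (Hsig2 : 0 < sig2) (HRb : 0 < Rb)
  (HpGmax : 0 < pGmax) (HpHmax : 0 < pHmax) (HwG : 0 < wG)
  (HEH : forall i, (i < N)%nat -> 0 <= EH i)
  (HhG : forall i, (i < N)%nat -> 0 < hG i)
  (HhH : forall i, (i < N)%nat -> 0 < hH i).

Local Notation rt p h := (rate tau W sig2 p h).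
Local Notation pinvG i := (pinv tau W sig2 Rb (hG i)).
Local Notation pinvH i := (pinv tau W sig2 Rb (hH i)).
Local Notation c i := (cost tau W sig2 Rb pGmax wG wD hG i).
Local Notation kap := (kappa tau pGmax wG wD).
Local Notation hat_feasible := (hatP1_feasible N tau W sig2 Rb pHmax EH hH).
Local Notation hat_obj := (hatP1_obj N tau W sig2 Rb pGmax wG wD hG).
Local Notation P1_feas := (P1_feasible N tau W sig2 Rb pGmax pHmax EH hG hH).
Local Notation IGc := (corr_IG tau W sig2 Rb pGmax wG wD hG).
Local Notation IDc := (corr_ID tau W sig2 Rb pGmax wG wD hG).
Local Notation pGc := (corr_pG tau W sig2 Rb pGmax wG wD hG).
Local Notation pHc := (corr_pH tau W sig2 Rb hH).

Lemma corr_block_cases (alpha : nat -> R) (i : nat) :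
  binary (alpha i) ->
  (IGc alpha i = 0 /\ corr_IH alpha i = 1 /\ IDc alpha i = 0 /\
   pGc alpha i = 0 /\ pHc alpha i = pinvH i /\ alpha i = 1)
  \/ (IGc alpha i = 1 /\ corr_IH alpha i = 0 /\ IDc alpha i = 0 /\
      pGc alpha i = pinvG i /\ pHc alpha i = 0 /\ alpha i = 0 /\ pinvG i <= kap)
  \/ (IGc alpha i = 0 /\ corr_IH alpha i = 0 /\ IDc alpha i = 1 /\
      pGc alpha i = 0 /\ pHc alpha i = 0 /\ alpha i = 0 /\ ~ pinvG i <= kap).
Proof.
  intros Ha.
  unfold corr_ID, corr_pG, corr_pH, corr_IG, corr_IH.
  destruct Ha as [-> | ->]; [destruct Rle_dec as [Hk|Hk]|].
  - right; left; repeat split; auto; ring.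
  - right; right; repeat split; auto; ring.
  - left; repeat split; ring.
Qed.

Lemma corr_P1_solution (alpha : nat -> R) :
  hat_feasible alpha ->
  P1_feas (IGc alpha) (corr_IH alpha) (IDc alpha) (pGc alpha) (pHc alpha)
  /\ P1_obj N tau wG wD (IDc alpha) (pGc alpha) = hat_obj alpha.
Proof.
  intros Hfeas; split.
  - intros i Hi.
    destruct (Hfeas i Hi) as [Hcum [Hpeak Hbin]].
    pose proof (pinv_nonneg tau W sig2 Rb (hG i) Htau HW Hsig2 (Rlt_le _ _ HRb) (HhG i Hi)).
    pose proof (pinv_nonneg tau W sig2 Rb (hH i) Htau HW Hsig2 (Rlt_le _ _ HRb) (HhH i Hi)).
    pose proof (rate_pinv tau W sig2 Rb (hG i) Htau HW Hsig2 (HhG i Hi)).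
    pose proof (rate_pinv tau W sig2 Rb (hH i) Htau HW Hsig2 (HhH i Hi)).
    assert (Hkap : kap <= pGmax) by apply Rmin_l.
    destruct (corr_block_cases alpha i Hbin)
      as [[-> [-> [-> [-> [-> Ha]]]]] | [[-> [-> [-> [-> [-> [Ha Hk]]]]]]
         | [-> [-> [-> [-> [-> [Ha _]]]]]]]];
      rewrite Ha in Hpeak;
      (split; [lra | split; [exact Hcum|]]); unfold binary;
      repeat split; first [lra | left; lra | right; lra].
  - unfold P1_obj, hatP1_obj.
    apply sumR_ext; intros i Hi.
    destruct (Hfeas i Hi) as [_ [_ Hbin]].
    unfold cost.
    destruct (corr_block_cases alpha i Hbin)
      as [[_ [_ [-> [-> [_ ->]]]]] | [[_ [_ [-> [-> [_ [-> Hk]]]]]]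
         | [_ [_ [-> [-> [_ [-> Hk]]]]]]]];
      destruct Rle_dec; try contradiction; ring.
Qed.

Lemma P1_block_lower_bound (i : nat) (IG IH ID pG pH : R) :
  (i < N)%nat -> IG + IH + ID = 1 ->
  IG * rt pG (hG i) + IH * rt pH (hH i) >= (1 - ID) * Rb ->
  0 <= pG <= pGmax -> 0 <= pH -> binary IG -> binary IH -> binary ID ->
  IH * pinvH i <= pH /\ (1 - IH) * c i <= wG * pG * tau + wD * ID.
Proof.
  intros Hi Hsum Hrate HpG HpH BG BH BD.
  assert (Hgrid : 0 <= wG * pG * tau) by (apply Rmult_le_pos; nra).
  destruct BG as [-> | ->], BH as [-> | ->], BD as [-> | ->]; try lra.
  - pose proof (cost_le_drop tau W sig2 Rb pGmax wG wD hG i Htau HwG).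
    split; lra.
  - assert (Hr : rt pH (hH i) >= Rb) by lra.
    pose proof (pinv_le_of_rate_ge tau W sig2 Rb (hH i) pH Htau HW Hsig2 (HhH i Hi) HpH Hr).
    split; lra.
  - assert (Hr : rt pG (hG i) >= Rb) by lra.
    pose proof (pinv_le_of_rate_ge tau W sig2 Rb (hG i) pG Htau HW Hsig2 (HhG i Hi)
                  (proj1 HpG) Hr) as Hpinv.
    pose proof (cost_le_grid tau W sig2 Rb pGmax wG wD hG i pG Htau HwG
                  (conj Hpinv (proj2 HpG))).
    split; lra.
Qed.

Lemma P1_solution_lower_bound (IG IH ID pG pH : nat -> R) :
  P1_feas IG IH ID pG pH ->
  hat_feasible IH /\ hat_obj IH <= P1_obj N tau wG wD ID pG.
Proof.
  intros Hfeas.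
  assert (Hblock : forall i, (i < N)%nat ->
            binary (IH i) /\ pH i <= pHmax /\ IH i * pinvH i <= pH i /\
            (1 - IH i) * c i <= wG * pG i * tau + wD * ID i).
  { intros i Hi.
    destruct (Hfeas i Hi) as [Hsum [_ [Hrate [HpG [HpH [BG [BH BD]]]]]]].
    destruct (P1_block_lower_bound i (IG i) (IH i) (ID i) (pG i) (pH i)
                Hi Hsum Hrate HpG (proj1 HpH) BG BH BD).
    repeat split; tauto. }
  split.
  - intros i Hi.
    destruct (Hblock i Hi) as [Hbin [HpH [Hpinv _]]].
    destruct (Hfeas i Hi) as [_ [Henergy _]].
    repeat split; [|lra | exact Hbin].
    eapply Rle_trans; [|exact Henergy].
    apply sumR_le; intros k Hk.
    apply Rmult_le_compat_r; [lra | apply (Hblock k ltac:(lia))].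
  - apply sumR_le; intros i Hi; apply (Hblock i Hi).
Qed.

Lemma hatP1_feasible_ext (a b : nat -> R) :
  (forall i, (i < N)%nat -> a i = b i) -> hat_feasible a -> hat_feasible b.
Proof.
  intros Hab Ha i Hi.
  destruct (Ha i Hi) as [Hcum [Hpeak Hbin]].
  rewrite <- (Hab i Hi).
  split; [|split; assumption].
  erewrite sumR_ext; [exact Hcum|].
  intros k Hk; cbv beta; rewrite Hab by lia; reflexivity.
Qed.

Lemma hatP1_obj_ext (a b : nat -> R) :
  (forall i, (i < N)%nat -> a i = b i) -> hat_obj a = hat_obj b.
Proof. intros Hab; apply sumR_ext; intros i Hi; cbv beta; rewrite Hab by exact Hi; reflexivity. Qed.

Lemma hatP1_feasible_zero : hat_feasible (fun _ => 0).
Proof.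
  intros i Hi.
  repeat split; [|lra | left; reflexivity].
  apply sumR_le; intros k Hk.
  rewrite !Rmult_0_l; apply HEH; lia.
Qed.

Lemma hatP1_has_optimum :
  exists m, hat_feasible m /\ forall a, hat_feasible a -> hat_obj m <= hat_obj a.
Proof.
  apply binary_program_has_minimizer with N.
  - exact hatP1_feasible_ext.
  - exact hatP1_obj_ext.
  - intros a Ha i Hi; apply (Ha i Hi).
  - exists (fun _ => 0); exact hatP1_feasible_zero.
Qed.

End Equivalence.

Theorem lemma1 (N : nat) (tau W sig2 Rb pGmax pHmax wG wD : R)
    (EH hG hH : nat -> R)
    (Htau : 0 < tau) (HW : 0 < W) (Hsig2 : 0 < sig2) (HRb : 0 < Rb)
    (HpGmax : 0 < pGmax) (HpHmax : 0 < pHmax) (HwG : 0 < wG) (HwD : 0 < wD)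
    (HEH : forall i, (i < N)%nat -> 0 <= EH i)
    (HhG : forall i, (i < N)%nat -> 0 < hG i)
    (HhH : forall i, (i < N)%nat -> 0 < hH i) :
  (* (i) every feasible alpha of hat P1 yields, via the assignment,
         a feasible solution of P1 with the same objective value *)
  (forall alpha : nat -> R,
     hatP1_feasible N tau W sig2 Rb pHmax EH hH alpha ->
     P1_feasible N tau W sig2 Rb pGmax pHmax EH hG hH
       (corr_IG tau W sig2 Rb pGmax wG wD hG alpha) (corr_IH alpha)
       (corr_ID tau W sig2 Rb pGmax wG wD hG alpha)
       (corr_pG tau W sig2 Rb pGmax wG wD hG alpha) (corr_pH tau W sig2 Rb hH alpha)
     /\ P1_obj N tau wG wD (corr_ID tau W sig2 Rb pGmax wG wD hG alpha)
          (corr_pG tau W sig2 Rb pGmax wG wD hG alpha)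
        = hatP1_obj N tau W sig2 Rb pGmax wG wD hG alpha)
  /\
  (* (ii) the two problems have the same (attained) optimal value *)
  (exists v : R,
     ((exists alpha, hatP1_feasible N tau W sig2 Rb pHmax EH hH alpha /\
                     hatP1_obj N tau W sig2 Rb pGmax wG wD hG alpha = v) /\
      (forall alpha, hatP1_feasible N tau W sig2 Rb pHmax EH hH alpha ->
                     v <= hatP1_obj N tau W sig2 Rb pGmax wG wD hG alpha)) /\
     ((exists IG IH ID pG pH,
         P1_feasible N tau W sig2 Rb pGmax pHmax EH hG hH IG IH ID pG pH /\
         P1_obj N tau wG wD ID pG = v) /\
      (forall IG IH ID pG pH,
         P1_feasible N tau W sig2 Rb pGmax pHmax EH hG hH IG IH ID pG pH ->
         v <= P1_obj N tau wG wD ID pG)))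
  /\
  (* (iii) an optimal alpha of hat P1 yields an optimal solution of P1 *)
  (forall alpha : nat -> R,
     hatP1_feasible N tau W sig2 Rb pHmax EH hH alpha ->
     (forall beta, hatP1_feasible N tau W sig2 Rb pHmax EH hH beta ->
        hatP1_obj N tau W sig2 Rb pGmax wG wD hG alpha
          <= hatP1_obj N tau W sig2 Rb pGmax wG wD hG beta) ->
     P1_feasible N tau W sig2 Rb pGmax pHmax EH hG hH
       (corr_IG tau W sig2 Rb pGmax wG wD hG alpha) (corr_IH alpha)
       (corr_ID tau W sig2 Rb pGmax wG wD hG alpha)
       (corr_pG tau W sig2 Rb pGmax wG wD hG alpha) (corr_pH tau W sig2 Rb hH alpha) /\
     (forall IG IH ID pG pH,
        P1_feasible N tau W sig2 Rb pGmax pHmax EH hG hH IG IH ID pG pH ->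
        P1_obj N tau wG wD (corr_ID tau W sig2 Rb pGmax wG wD hG alpha)
          (corr_pG tau W sig2 Rb pGmax wG wD hG alpha)
        <= P1_obj N tau wG wD ID pG)).
Proof.
  pose proof (corr_P1_solution N tau W sig2 Rb pGmax pHmax wG wD EH hG hH
                Htau HW Hsig2 HRb HpGmax HpHmax HhG HhH) as Hcorr.
  pose proof (P1_solution_lower_bound N tau W sig2 Rb pGmax pHmax wG wD EH hG hH
                Htau HW Hsig2 HwG HhG HhH) as Hlower.
  destruct (hatP1_has_optimum N tau W sig2 Rb pGmax pHmax wG wD EH hG hH HpHmax HEH)
    as [m [Hm Hmin]].
  split; [exact Hcorr|]; split.
  - exists (hatP1_obj N tau W sig2 Rb pGmax wG wD hG m).
    split; [split; [exists m; auto | exact Hmin]|]; split.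
    + destruct (Hcorr m Hm) as [Hf Hobj]; do 5 eexists; eauto.
    + intros IG IH ID pG pH Hf.
      destruct (Hlower IG IH ID pG pH Hf) as [Hf' Hle].
      specialize (Hmin IH Hf'); lra.
  - intros alpha Ha Hopt.
    destruct (Hcorr alpha Ha) as [Hf Hobj]; split; [exact Hf|].
    intros IG IH ID pG pH Hf'.
    destruct (Hlower IG IH ID pG pH Hf') as [Hfeas' Hle].
    specialize (Hopt IH Hfeas'); lra.
Qed.
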